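(* Let $N$ be a phylogenetic network on $X$, and let $O$ and $R$ be the sets of omnians and reticulations of $N$. Then $$l(N)=p(N)=t(N)=|O|-m(\mathcal{B}_N),$$ where $m(\mathcal{B}_N)$ is the size of a maximum matching of $\mathcal{B}_N$.
   Context: $X$ is a nonempty finite set. A phylogenetic network on $X$ is a rooted acyclic digraph with no parallel arcs such that: the unique root has out-degree at least one; $X$ is exactly the set of vertices of out-degree zero (leaves), each of in-degree one; every other vertex either has in-degree one and out-degree at least two (a tree vertex) or in-degree at least two and out-degree one (a reticulation). If $|X|=1$, the network may also consist of the single vertex in $X$. An omnian is a non-leaf vertex all of whose children are reticulations (an omnian may itself be a reticulation). $\mathcal{B}_N$ is the bipartite graph with vertex bipartition $\{O,R\}$ (taken as disjoint copies) with an edge $\{o,r\}$ for each arc $(o,r)$ of $N$ with $o\in O$, $r\in R$. A phylogenetic network $N$ on $X$ is tree-based if it can be obtained from some phylogenetic $X$-tree (phylogenetic network with no reticulations) $T$ by first taking a subdivision of $T$ (new vertices are attachment points) and then adding new arcs $(u,v)$ where either $u$ and $v$ are both attachment points, or $u$ is a non-leaf vertex of $T$ and $v$ is an attachment point; equivalently, $N$ has a rooted spanning tree with the same root as $N$ all of whose leaves lie in $X$. Attaching a new leaf to $N$ means subdividing an arc of $N$ with a new vertex $u$ and adding a new leaf $y$ and the arc $(u,y)$. Define: $l(N)$ is the minimum, over all spanning trees of $N$ rooted at the root of $N$, of the number of leaves of the spanning tree not in $X$; $p(N)=d(N)-|X|$ where $d(N)$ is the smallest number of vertex-disjoint directed paths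 of $N$ that partition its vertex set; $t(N)$ is the minimum number of new leaves that need to be attached (successively) to $N$ so that the resulting network is tree-based. *)

From mathcomp Require Import all_boot.
Set Implicit Arguments. Unset Strict Implicit. Unset Printing Implicit Defensive.

Section Net.
Variable V : finType.
Variable a : rel V.

Definition indeg (v : V) : nat := #|[set u | a u v]|.
Definition outdeg (v : V) : nat := #|[set w | a v w]|.

Definition acyclic : Prop := forall u v, a u v -> ~~ connect a v u.

(* Phylogenetic network on X with root r (vertex set = all of V). *)
Definition phylo_network (r : V) (X : {set V}) : Prop :=
  [/\ X != set0, acyclic, indeg r = 0,
      (forall v, indeg v = 0 -> v = r) &
      ((#|V| = 1 /\ X = [set r]) \/
       [/\ 0 < outdeg r,
           (forall v, (v \in X) = (outdeg v == 0)),
           (forall v, v \in X -> indeg v = 1) &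
           (forall v, v != r -> v \notin X ->
              (indeg v = 1 /\ 2 <= outdeg v) \/ (2 <= indeg v /\ outdeg v = 1))])].

Definition reticulation (v : V) : bool := (2 <= indeg v) && (outdeg v == 1).

Definition omnians (X : {set V}) : {set V} :=
  [set v | (v \notin X) && [forall w, a v w ==> reticulation w]].
Definition reticulations : {set V} := [set v | reticulation v].

(* matchings of B_N: pairs (o, r') stand for edges {o in copy O, r' in copy R} *)
Definition matchingB (X : {set V}) (M : {set V * V}) : bool :=
  [forall e in M, [&& e.1 \in omnians X, e.2 \in reticulations & a e.1 e.2]] &&
  [forall e in M, forall e' in M, ((e.1 == e'.1) || (e.2 == e'.2)) ==> (e == e')].

Definition max_matching_size (X : {set V}) : nat :=
  \max_(M : {set V * V} | matchingB X M) #|M|.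

Definition spanning_tree (r : V) (T : {set V * V}) : Prop :=
  [/\ T \subset [set e | a e.1 e.2],
      (forall v, v != r -> #|[set u | (u, v) \in T]| = 1),
      #|[set u | (u, r) \in T]| = 0 &
      forall v, connect (fun x y => (x, y) \in T) r v].

Definition tree_leaves (T : {set V * V}) : {set V} :=
  [set v | [forall w, (v, w) \notin T]].

Definition tree_based (r : V) (X : {set V}) : Prop :=
  exists T, spanning_tree r T /\ tree_leaves T \subset X.

(* candidate values for l(N) *)
Definition l_cand (r : V) (X : {set V}) (n : nat) : Prop :=
  exists T, spanning_tree r T /\ #|tree_leaves T :\: X| = n.

Definition dpath (s : seq V) : bool :=
  if s is x :: s' then path a x s' else false.

Definition path_partition (P : seq (seq V)) : Prop :=
  [/\ all dpath P, uniq (flatten P) & forall v, v \in flatten P].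

Definition d_cand (n : nat) : Prop :=
  exists P, path_partition P /\ size P = n.

End Net.

(* Attaching a new leaf on arc (x,z): vertices are Some (Some v) for old v,
   Some None for the subdivision vertex u, None for the new leaf y. *)
Definition att_rel (V : finType) (a : rel V) (x z : V) : rel (option (option V)) :=
  fun p q =>
    match p, q with
    | Some (Some p'), Some (Some q') => a p' q' && ((p', q') != (x, z))
    | Some (Some p'), Some None => p' == x
    | Some None, Some (Some q') => q' == z
    | Some None, None => true
    | _, _ => false
    end.

Definition att_leaves (V : finType) (X : {set V}) : {set option (option V)} :=
  None |: [set Some (Some v) | v in X].

(* attach_tb a r X k : attaching k new leaves successively to N can make it tree-based *)
Inductive attach_tb : forall V : finType, rel V -> V -> {set V} -> nat -> Prop :=
| AT0 (V : finType) (a : rel V) (r : V) (X : {set V}) :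
    tree_based a r X -> attach_tb a r X 0
| ATS (V : finType) (a : rel V) (r : V) (X : {set V}) (x z : V) (k : nat) :
    a x z ->
    attach_tb (att_rel a x z) (Some (Some r)) (att_leaves X) k ->
    attach_tb a r X k.+1.

Definition is_min (P : nat -> Prop) (n : nat) : Prop :=
  P n /\ forall m, P m -> n <= m.

From mathcomp Require Import all_boot zify.
Set Implicit Arguments. Unset Strict Implicit. Unset Printing Implicit Defensive.

(* Everything is compared through arc matchings: sets S of arcs no two of which share a tail
   or a head. A rooted spanning tree with leaf set L contains one of size |V| - |L| (one child
   arc per internal vertex), and a partition into d paths contains one of size |V| - d;
   conversely, as N is acyclic, S splits V into |V| - |S| paths. The tails of S avoid X, and
   those that are omnians are the omnian ends of a matching of B_N, so the omnians that are
   not tails number at least |O| - m, whence |S| + |X| + (|O| - m) <= |V|. This bounds l(N)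
   and p(N) from below. Equality is attained by the spanning tree in which every reticulation
   matched by a maximum matching hangs below its partner: its leaves outside X are unmatched
   omnians. Finally, attaching a new leaf on an arc leaving a tree leaf b outside X makes b
   internal, while contracting an attached leaf creates at most one new tree leaf, so
   t(N) = l(N). *)

Section ArcMatching.
Variables (V : finType) (a : rel V).

Definition arc_matching (S : {set V * V}) : Prop :=
  [/\ forall e, e \in S -> a e.1 e.2, {in S &, injective fst} & {in S &, injective snd}].

Lemma arc_matching0 : arc_matching set0.
Proof. by split=> [e|e e'|e e']; rewrite inE. Qed.

Lemma sub_arc_matching (S S' : {set V * V}) :
  S' \subset S -> arc_matching S -> arc_matching S'.
Proof.
move=> /subsetP sub [arcS inj1 inj2].
by split=> [e /sub /arcS // | e e' /sub eS /sub e'S | e e' /sub eS /sub e'S];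
  [exact: inj1 | exact: inj2].
Qed.

Lemma matchingBP X (M : {set V * V}) :
  matchingB a X M <-> arc_matching M /\ M \subset setX (omnians a X) (reticulations a).
Proof.
split.
  case/andP=> /forall_inP endsM /forall_inP injM.
  have eqM e e' : e \in M -> e' \in M -> (e.1 == e'.1) || (e.2 == e'.2) -> e = e'.
    by move=> eM e'M eq12; apply/eqP; exact: implyP (forall_inP (injM e eM) e' e'M) eq12.
  split; last by apply/subsetP=> -[o w] /endsM /and3P[oO wR _]; rewrite in_setX oO wR.
  split=> [e /endsM /and3P[] //| e e' eM e'M /eqP eq1 | e e' eM e'M /eqP eq2];
    by apply: eqM; rewrite ?eq1 ?eq2 ?orbT.
case=> -[arcM inj1 inj2] /subsetP subM; apply/andP; split; apply/forall_inP=> e eM.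
  by move: (arcM e eM) (subM e eM); case: e {eM} => o w /= -> /setXP[-> ->].
apply/forall_inP=> e' e'M; apply/implyP=> /orP[] /eqP eq12.
  by apply/eqP/inj1.
by apply/eqP/inj2.
Qed.

Lemma leq_max_matching X (M : {set V * V}) : matchingB a X M -> #|M| <= max_matching_size a X.
Proof. exact: (@leq_bigmax_cond _ (matchingB a X) (fun M => #|M|)). Qed.

Lemma max_matching_attained X : exists2 M, matchingB a X M & #|M| = max_matching_size a X.
Proof.
have : 0 < #|[pred M : {set V * V} | matchingB a X M]|.
  apply/card_gt0P; exists set0; rewrite inE; apply/matchingBP.
  by rewrite sub0set; split; first exact: arc_matching0.
case/(eq_bigmax_cond (fun M : {set V * V} => #|M|)) => M; rewrite inE => MB maxM.
by exists M; rewrite // /max_matching_size maxM.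
Qed.

End ArcMatching.

Lemma connect_ind (T : finType) (e : rel T) (P : T -> Prop) x y :
  P x -> (forall u v, P u -> e u v -> P v) -> connect e x y -> P y.
Proof.
move=> Px stepP /connectP[p + ->]; elim: p x Px => [|v p IHp] x //= Px /andP[xv pv].
exact: IHp (stepP _ _ Px xv) pv.
Qed.

Lemma connect_homo (T T' : finType) (e : rel T) (e' : rel T') (f : T -> T') x y :
  {homo f : u v / e u v >-> e' u v} -> connect e x y -> connect e' (f x) (f y).
Proof.
move=> homo_f /connectP[p pp ->]; apply/connectP; exists (map f p); last by rewrite last_map.
exact: homo_path pp.
Qed.

Lemma cardsU_disjoint (T : finType) (A B : {set T}) :
  [disjoint A & B] -> #|A :|: B| = #|A| + #|B|.
Proof. by move=> dAB; apply/eqP; rewrite (leq_card_setU A B).2. Qed.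

Section Acyclic.
Variables (V : finType) (a : rel V).
Hypothesis acyclic_a : acyclic a.

Lemma acyclic_irrefl v : ~~ a v v.
Proof. by apply/negP=> vv; move: (acyclic_a vv); rewrite connect0. Qed.

Lemma card_ancestors_lt u v :
  a u v -> #|[set x | connect a x u]| < #|[set x | connect a x v]|.
Proof.
move=> uv; apply/proper_card/properP; split.
  by apply/subsetP=> x; rewrite !inE => xu; apply: connect_trans xu (connect1 uv).
by exists v; rewrite !inE ?connect0 ?(acyclic_a uv).
Qed.

End Acyclic.

Section SpanningTree.
Variables (V : finType) (a : rel V) (r : V).

Lemma spanning_tree_intro (T : {set V * V}) :
  (forall e, e \in T -> a e.1 e.2) ->
  (forall v, v != r -> exists u, (u, v) \in T) ->
  (forall p q w, (p, w) \in T -> (q, w) \in T -> p = q) ->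
  (forall u, (u, r) \notin T) ->
  (forall v, connect (fun x y => (x, y) \in T) r v) ->
  spanning_tree a r T.
Proof.
move=> arcT parT uniqT rootT connT; split=> // [|v vr|].
- by apply/subsetP=> e /arcT; rewrite inE.
- have [u uv] := parT v vr; apply/eqP/card1P; exists u => w.
  by rewrite !inE; apply/idP/eqP=> [/uniqT/(_ uv) //|->].
- by apply/eqP; rewrite cards_eq0; apply/eqP/setP=> u; rewrite !inE (negbTE (rootT u)).
Qed.

Variable T : {set V * V}.
Hypothesis sT : spanning_tree a r T.

Lemma spanning_tree_arc e : e \in T -> a e.1 e.2.
Proof. by case: sT => /subsetP subT _ _ _ /subT; rewrite inE. Qed.

Lemma spanning_tree_parent v : v != r -> exists u, (u, v) \in T.
Proof.
case: sT => _ parT _ _ /parT /eqP/card1P[u uv].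
by exists u; move: (uv u); rewrite !inE eqxx.
Qed.

Lemma spanning_tree_parent_uniq p q w : (p, w) \in T -> (q, w) \in T -> p = q.
Proof.
case: sT => _ parT rootT _ pw qw.
have : #|[set u | (u, w) \in T]| <= 1 by have [->|/parT ->] := eqVneq w r; rewrite ?rootT.
by move/card_le1_eqP/(_ p q); rewrite !inE => ->.
Qed.

Lemma spanning_tree_root u : (u, r) \notin T.
Proof.
case: sT => _ _ /eqP; rewrite cards_eq0 => /eqP/setP/(_ u) + _.
by rewrite !inE => ->.
Qed.

Lemma spanning_tree_connect v : connect (fun x y => (x, y) \in T) r v.
Proof. by case: sT. Qed.

Lemma spanning_tree_arc_matching :
  exists2 S, arc_matching a S & #|S| + #|tree_leaves T| = #|V|.
Proof.
pose child v := odflt v [pick w | (v, w) \in T].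
have child_in v : v \notin tree_leaves T -> (v, child v) \in T.
  rewrite inE negb_forall => /existsP[w]; rewrite negbK /child => vw.
  by case: pickP => [//|/(_ w)]; rewrite vw.
exists [set (v, child v) | v in ~: tree_leaves T].
  split.
  - by move=> e /imsetP[v]; rewrite inE => /child_in/spanning_tree_arc vc ->.
  - by move=> e e' /imsetP[v _ ->] /imsetP[w _ ->] /= ->.
  - move=> e e' /imsetP[v]; rewrite inE => /child_in vc ->.
    move=> /imsetP[w]; rewrite inE => /child_in wc -> /= cvw.
    by rewrite cvw in vc; rewrite (spanning_tree_parent_uniq vc wc).
by rewrite card_imset => [|v w []//]; rewrite addnC cardsC.
Qed.

End SpanningTree.

Section ParentTree.
Variables (V : finType) (a : rel V) (r : V) (par : V -> V).

Definition parent_tree : {set V * V} := [set e | (e.2 != r) && (e.1 == par e.2)].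

Lemma parent_tree_spanning :
  acyclic a -> (forall v, v != r -> a (par v) v) -> spanning_tree a r parent_tree.
Proof.
move=> acyc par_arc; apply: spanning_tree_intro.
- by move=> [u v]; rewrite inE /= => /andP[/par_arc + /eqP ->].
- by move=> v vr; exists (par v); rewrite inE vr eqxx.
- by move=> p q w; rewrite !inE /= => /andP[_ /eqP ->] /andP[_ /eqP ->].
- by move=> u; rewrite inE eqxx.
move=> v; have [n] := ubnP #|[set x | connect a x v]|; elim: n v => // n IHn v lt_v_n.
have [->|vr] := eqVneq v r; first exact: connect0.
apply: connect_trans (IHn (par v) _) (connect1 _); last by rewrite inE vr eqxx.
exact: leq_trans (card_ancestors_lt acyc (par_arc v vr)) lt_v_n.
Qed.

Lemma parent_tree_leaf v w : v \in tree_leaves parent_tree -> w != r -> par w != v.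
Proof.
by rewrite inE => /forallP/(_ w); rewrite inE /= => /nandP[/negPn ->|]; rewrite // eq_sym.
Qed.

End ParentTree.

Section PathPartition.
Variable V : finType.
Implicit Types (e : rel V) (P : seq (seq V)).

Lemma sub_path_partition e e' P : subrel e e' -> path_partition e P -> path_partition e' P.
Proof.
move=> ee' [dP uP cP]; split=> //; apply/allP=> p /(allP dP).
by case: p => [|x s] //; exact: sub_path.
Qed.

Lemma size_path_partition e P : path_partition e P -> size (flatten P) = #|V|.
Proof. by case=> _ uP cP; rewrite -(card_uniqP uP); apply: eq_card => v; rewrite cP. Qed.

Lemma arc_matchingU e (S1 S2 : {set V * V}) :
  arc_matching e S1 -> arc_matching e S2 ->
  (forall f1 f2, f1 \in S1 -> f2 \in S2 -> f1.1 != f2.1 /\ f1.2 != f2.2) ->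
  arc_matching e (S1 :|: S2) /\ #|S1 :|: S2| = #|S1| + #|S2|.
Proof.
move=> [arc1 inj11 inj12] [arc2 inj21 inj22] sep; split; last first.
  apply: cardsU_disjoint; rewrite -setI_eq0; apply/eqP/setP=> f; rewrite !inE.
  by apply/andP=> -[f1 f2]; case: (sep f f f1 f2); rewrite eqxx.
split=> [f|f f'|f f']; rewrite ?inE.
- by case/orP=> [/arc1|/arc2].
- case/orP=> [fS|fS] /orP[f'S|f'S] eq1; [exact: inj11 | | | exact: inj21].
    by case: (sep _ _ fS f'S); rewrite eq1 eqxx.
  by case: (sep _ _ f'S fS); rewrite eq1 eqxx.
- case/orP=> [fS|fS] /orP[f'S|f'S] eq2; [exact: inj12 | | | exact: inj22].
    by case: (sep _ _ fS f'S); rewrite eq2 eqxx.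
  by case: (sep _ _ f'S fS); rewrite eq2 eqxx.
Qed.

Lemma path_arc_matching e x s : uniq (x :: s) -> path e x s ->
  exists S, [/\ arc_matching e S, #|S| = size s & forall f, f \in S -> f.1 \in x :: s /\ f.2 \in s].
Proof.
elim: s x => [|y s IHs] x.
  by exists set0; split=> [||f]; rewrite ?cards0 ?inE //; exact: arc_matching0.
rewrite cons_uniq => /andP[xNys uys] /= /andP[xy pys].
have [S [mS cS endS]] := IHs y uys pys.
have m1 : arc_matching e [set (x, y)].
  by split=> [f|f f'|f f']; rewrite ?inE => /eqP-> // /eqP->.
have sep f1 f2 : f1 \in [set (x, y)] -> f2 \in S -> f1.1 != f2.1 /\ f1.2 != f2.2.
  rewrite inE => /eqP-> /endS[f21 f22] /=; move: uys; rewrite cons_uniq => /andP[yNs _].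
  by split; apply/eqP=> eq; [rewrite eq f21 in xNys | rewrite eq f22 in yNs].
have [mU cU] := arc_matchingU m1 mS sep.
exists ([set (x, y)] :|: S); split=> //; first by rewrite cU cards1 cS.
move=> f; rewrite inE => /orP[|/endS[f1 f2]]; last by split; rewrite in_cons ?f1 ?f2 orbT.
by rewrite inE => /eqP-> /=; rewrite !inE !eqxx.
Qed.

Lemma paths_arc_matching e P : all (dpath e) P -> uniq (flatten P) ->
  exists S, [/\ arc_matching e S, #|S| + size P = size (flatten P)
            & forall f, f \in S -> f.1 \in flatten P /\ f.2 \in flatten P].
Proof.
elim: P => [|p P IHP] /=.
  by exists set0; split=> [||f]; rewrite ?cards0 ?inE //; exact: arc_matching0.
case/andP=> dp dP; rewrite cat_uniq => /and3P[up disj uP].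
have [S1 [m1 c1 end1]] : exists S, [/\ arc_matching e S, #|S| + 1 = size p
                                   & forall f, f \in S -> f.1 \in p /\ f.2 \in p].
  case: p dp up {disj} => [|x s] //= pxs uxs.
  have [S [mS cS endS]] := path_arc_matching uxs pxs.
  by exists S; split=> // [|f /endS[-> f2]]; [rewrite cS addn1 | rewrite inE f2 orbT].
have [S2 [m2 c2 end2]] := IHP dP uP.
have outside v : v \in flatten P -> v \notin p.
  by move=> vP; apply: contraNN disj => vp; apply/hasP; exists v.
have sep f1 f2 : f1 \in S1 -> f2 \in S2 -> f1.1 != f2.1 /\ f1.2 != f2.2.
  move=> /end1[f11 f12] /end2[/outside f21 /outside f22].
  by split; [apply: contraNneq f21 => <- | apply: contraNneq f22 => <-].
have [mU cU] := arc_matchingU m1 m2 sep.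
exists (S1 :|: S2); split=> //; first by rewrite cU size_cat; lia.
by move=> f; rewrite inE !mem_cat => /orP[/end1|/end2][-> ->]; rewrite ?orbT.
Qed.

Lemma path_partition_arc_matching e P : path_partition e P ->
  exists2 S, arc_matching e S & #|S| + size P = #|V|.
Proof.
move=> pP; case: (pP) => dP uP _; have [S [mS cS _]] := paths_arc_matching dP uP.
by exists S; rewrite // cS (size_path_partition pP).
Qed.

Lemma mem_path_last e x s u : path e x s -> u \in x :: s -> (forall v, ~~ e u v) -> u = last x s.
Proof.
elim: s x => [|y s IHs] x /=; first by rewrite inE => _ /eqP.
case/andP=> xy pys; rewrite inE => /orP[/eqP-> /(_ y)|]; first by rewrite xy.
exact: IHs.
Qed.

Lemma mem_path_head e x s w : path e x s -> w \in x :: s -> (forall v, ~~ e v w) -> w = x.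
Proof.
elim: s x => [|y s IHs] x /=; first by rewrite inE => _ /eqP.
case/andP=> xy pys; rewrite inE => /orP[/eqP //|wys noPred].
by have := noPred x; rewrite (IHs y pys wys noPred) xy.
Qed.

Lemma path_partition_merge e P x s y t :
  path_partition e P -> x :: s \in P -> y :: t \in P -> x :: s != y :: t -> e (last x s) y ->
  exists2 P', path_partition e P' & (size P').+1 = size P.
Proof.
move=> [dP uP cP] xsP ytP neq xsy.
have ytP' : y :: t \in rem (x :: s) P.
  by move: ytP; rewrite (perm_mem (perm_to_rem xsP)) inE eq_sym (negbTE neq).
set rest := rem (y :: t) (rem (x :: s) P).
have permP : perm_eq P [:: x :: s, y :: t & rest].
  by apply: perm_trans (perm_to_rem xsP) _; rewrite perm_cons perm_to_rem.
have flatP : flatten ((x :: s ++ y :: t) :: rest) = flatten [:: x :: s, y :: t & rest].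
  by rewrite /= -catA.
exists ((x :: s ++ y :: t) :: rest); last by rewrite (perm_size permP).
split.
- have /and3P[pxs pyt drest] : all (dpath e) [:: x :: s, y :: t & rest].
    by rewrite -(perm_all _ permP).
  by move: pxs pyt => /= pxs pyt; rewrite /= cat_path pxs /= xsy pyt.
- by rewrite flatP -(perm_uniq (perm_flatten permP)).
- by move=> v; rewrite flatP -(perm_mem (perm_flatten permP)).
Qed.

Lemma singleton_path_partition e : path_partition e [seq [:: v] | v <- enum V].
Proof.
have flat1 s : flatten [seq [:: v] | v <- s] = s by elim: s => //= v s ->.
split; rewrite ?flat1 ?enum_uniq //; first by apply/allP=> _ /mapP[v _ ->].
by move=> v; rewrite mem_enum.
Qed.

Definition arc_rel (S : {set V * V}) : rel V := fun u v => (u, v) \in S.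

(* In a partition for [S :\ (u, w)], [u] ends a path and [w] starts one; by acyclicity these
   paths differ, and the arc [(u, w)] joins them. *)
Lemma path_partition_add_arc (a : rel V) S u w P :
  acyclic a -> arc_matching a S -> (u, w) \in S -> path_partition (arc_rel (S :\ (u, w))) P ->
  exists2 P', path_partition (arc_rel S) P' & (size P').+1 = size P.
Proof.
move=> acyc [arcS inj1 inj2] uwS pP; case: (pP) => dP _ cP.
have noSucc v : (u, v) \notin S :\ (u, w).
  rewrite in_setD1 negb_and negbK; have [uvS|] := boolP ((u, v) \in S); last by rewrite orbT.
  by rewrite (inj1 _ _ uvS uwS erefl) eqxx.
have noPred v : (v, w) \notin S :\ (u, w).
  rewrite in_setD1 negb_and negbK; have [vwS|] := boolP ((v, w) \in S); last by rewrite orbT.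
  by rewrite (inj2 _ _ vwS uwS erefl) eqxx.
have [[|x s] xsP uxs] := flattenP (cP u); first by [].
have [[|y t] ytP wyt] := flattenP (cP w); first by [].
have ulast := mem_path_last (allP dP _ xsP) uxs noSucc.
have wy := mem_path_head (allP dP _ ytP) wyt noPred.
have sub_a : subrel (arc_rel (S :\ (u, w))) a.
  by move=> v v'; rewrite /arc_rel inE => /andP[_ /(arcS (v, v'))].
have neq : x :: s != y :: t.
  apply: contraNneq (acyc _ _ (arcS _ uwS)) => -[xy _]; rewrite /= wy -xy ulast.
  exact: path_connect (sub_path sub_a (allP dP _ xsP)) _ (mem_last x s).
have pPS : path_partition (arc_rel S) P.
  by apply: sub_path_partition pP => v v'; rewrite /arc_rel inE => /andP[].
by apply: path_partition_merge pPS xsP ytP neq _; rewrite /arc_rel -ulast -wy.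
Qed.

Lemma arc_matching_path_partition (a : rel V) (S : {set V * V}) :
  acyclic a -> arc_matching a S -> exists2 P, path_partition a P & size P + #|S| = #|V|.
Proof.
move=> acyc mS.
suff [P pP sizeP] : exists2 P, path_partition (arc_rel S) P & size P + #|S| = #|V|.
  by exists P => //; case: mS => arcS _ _; apply: sub_path_partition pP => u v /(arcS (u, v)).
have [n] := ubnP #|S|; elim: n S mS => // n IHn S mS lt_S_n.
have [->|[[u w] uwS]] := set_0Vmem S.
  exists [seq [:: v] | v <- enum V]; first exact: singleton_path_partition.
  by rewrite cards0 addn0 size_map cardT.
have cS : #|S| = #|S :\ (u, w)|.+1 by rewrite (cardsD1 (u, w)) uwS.
have mS' : arc_matching a (S :\ (u, w)) by apply: sub_arc_matching mS; exact: subsetDl.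
have [|P pP sizeP] := IHn _ mS'; first by move: lt_S_n; rewrite cS.
have [P' pP' sizeP'] := path_partition_add_arc acyc mS uwS pP.
by exists P' => //; rewrite cS addnS -addSn sizeP'.
Qed.

End PathPartition.

Section Network.
Variables (V : finType) (a : rel V) (r : V) (X : {set V}).
Hypothesis netN : phylo_network a r X.

Local Notation k := (#|omnians a X| - max_matching_size a X).

Lemma network_acyclic : acyclic a.
Proof. by case: netN. Qed.

Lemma leaf_no_arc v w : v \in X -> ~~ a v w.
Proof.
case: netN => _ acyc _ _ [[/fintype1[x all_x] _]|[_ leafX _ _]] vX.
  by rewrite (all_x w) (all_x v) acyclic_irrefl.
apply/negP=> vw; move: vX; rewrite leafX cards_eq0 => /eqP/setP/(_ w).
by rewrite !inE vw.
Qed.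

Lemma nonleaf_out_arc v : v \notin X -> exists w, a v w.
Proof.
case: netN => _ _ _ _ [[/fintype1[x all_x] ->]|[_ leafX _ _]] vNX.
  by rewrite inE (all_x v) (all_x r) eqxx in vNX.
by move: vNX; rewrite leafX cards_eq0 => /set0Pn[w]; rewrite inE; exists w.
Qed.

Lemma no_arc_to_root u : ~~ a u r.
Proof.
case: netN => _ _ /eqP + _ _.
by rewrite cards_eq0 => /eqP/setP/(_ u); rewrite !inE => ->.
Qed.

Lemma arc_target_not_root u v : a u v -> v != r.
Proof. by move=> uv; apply: contraNneq (no_arc_to_root u) => <-. Qed.

Lemma in_arc_exists v : v != r -> exists u, a u v.
Proof.
case: netN => _ _ _ root_uniq _ vr.
have : indeg a v != 0 by apply: contra_neq vr => /root_uniq.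
by rewrite cards_eq0 => /set0Pn[u]; rewrite inE; exists u.
Qed.

Lemma tree_vertex_parent_uniq u u' w :
  a u w -> a u' w -> ~~ reticulation a w -> u = u'.
Proof.
move=> uw u'w wNret.
suff : indeg a w <= 1 by move/card_le1_eqP/(_ u' u); rewrite !inE => ->.
case: netN => _ acyc _ _ [[/fintype1[x all_x] _]|[_ _ leaf_indeg types]].
  by move: uw; rewrite (all_x u) (all_x w) (negbTE (acyclic_irrefl acyc x)).
have [/leaf_indeg -> //|wNX] := boolP (w \in X).
case: (types w (arc_target_not_root uw) wNX) => [[-> //]|[ret out1]].
by move: wNret; rewrite /reticulation ret out1.
Qed.

Lemma arc_matching_bound S : arc_matching a S -> #|S| + #|X| + k <= #|V|.
Proof.
move=> mS; case: (mS) => arcS inj1 _.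
set O := omnians a X; set tails := [set e.1 | e in S].
have card_tails : #|tails| = #|S| by exact: card_in_imset.
have matched : #|O :&: tails| <= max_matching_size a X.
  pose M := [set e in S | e.1 \in O].
  have MB : matchingB a X M.
    apply/matchingBP; split.
      by apply: sub_arc_matching mS; apply/subsetP=> e; rewrite inE => /andP[].
    apply/subsetP=> -[o w]; rewrite inE /= => /andP[owS oO]; rewrite in_setX oO /=.
    by move: oO; rewrite inE => /andP[_ /forallP/(_ w)]; rewrite (arcS _ owS) inE.
  apply: leq_trans (leq_max_matching MB); apply: leq_trans (leq_imset_card fst M).
  apply/subset_leq_card/subsetP=> v; rewrite inE => /andP[vO /imsetP[e eS ev]].
  by apply/imsetP; exists e; rewrite // inE eS -ev.
have tailsX : [disjoint tails & X].
  rewrite -setI_eq0; apply/eqP/setP=> v; rewrite !inE; apply/andP=> -[/imsetP[e eS ->] eX].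
  by have := leaf_no_arc e.2 eX; rewrite arcS.
have freeO : [disjoint O :\: tails & tails :|: X].
  rewrite -setI_eq0; apply/eqP/setP=> v; rewrite !inE; apply/andP=> -[/andP[vNt vO]].
  case/orP=> [vt|vX]; first by rewrite vt in vNt.
  by move: vO; rewrite vX.
have := max_card (O :\: tails :|: (tails :|: X)).
rewrite cardsU_disjoint // cardsU_disjoint // card_tails.
have := cardsID tails O; lia.
Qed.

Lemma spanning_tree_leaves_bound T : spanning_tree a r T -> k <= #|tree_leaves T :\: X|.
Proof.
move=> sT; have [S mS cS] := spanning_tree_arc_matching sT.
have := arc_matching_bound mS; have := cardsID X (tree_leaves T).
have := subset_leq_card (subsetIr (tree_leaves T) X); lia.
Qed.

Lemma path_partition_bound P : path_partition a P -> #|X| + k <= size P.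
Proof.
move=> pP; have [S mS cS] := path_partition_arc_matching pP.
have := arc_matching_bound mS; lia.
Qed.

Definition matched_parent (M : {set V * V}) (v : V) : V :=
  if [pick o | (o, v) \in M] is Some o then o else odflt v [pick u | a u v].

Lemma matched_parent_arc (M : {set V * V}) :
  (forall e, e \in M -> a e.1 e.2) -> forall v, v != r -> a (matched_parent M v) v.
Proof.
move=> arcM v vr; rewrite /matched_parent; case: pickP => [o /arcM //|_].
case: pickP => [u //|noPar]; have [u uv] := in_arc_exists vr.
by have := noPar u; rewrite uv.
Qed.

Lemma matched_tree_leaves (M : {set V * V}) : matchingB a X M ->
  tree_leaves (parent_tree r (matched_parent M)) :\: X \subset omnians a X :\: [set e.1 | e in M].
Proof.
move/matchingBP=> [[arcM _ injM2] /subsetP subM].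
set par := matched_parent M; set T := parent_tree r par.
have leaf_par v w : v \in tree_leaves T -> a v w -> par w != v.
  by move=> vl vw; apply: parent_tree_leaf vl (arc_target_not_root vw).
apply/subsetP=> v; rewrite inE => /andP[vNX vl]; rewrite inE; apply/andP; split.
  apply/negP=> /imsetP[[v' w] vwM /= ev]; rewrite -ev in vwM.
  move: (leaf_par v w vl (arcM _ vwM)); rewrite /par /matched_parent.
  case: pickP => [o owM|/(_ v)]; last by rewrite vwM.
  by case: (injM2 _ _ owM vwM erefl) => ->; rewrite eqxx.
rewrite inE vNX /=; apply/forallP=> w; apply/implyP=> vw.
apply: contra_neqT (leaf_par v w vl vw) => wNret; rewrite /par /matched_parent.
case: pickP => [o owM|_].
  by move: (subM _ owM); rewrite in_setX => /andP[_]; rewrite inE (negbTE wNret).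
case: pickP => [u uw|/(_ v)]; last by rewrite vw.
exact: tree_vertex_parent_uniq uw vw wNret.
Qed.

Lemma optimal_spanning_tree : exists2 T, spanning_tree a r T & #|tree_leaves T :\: X| = k.
Proof.
have [M MB cM] := max_matching_attained a X.
have [[arcM injM1 _] /subsetP subM] := (matchingBP a X M).1 MB.
have sT := parent_tree_spanning network_acyclic (matched_parent_arc arcM).
exists (parent_tree r (matched_parent M)) => //.
apply/eqP; rewrite eqn_leq spanning_tree_leaves_bound // andbT.
apply: leq_trans (subset_leq_card (matched_tree_leaves MB)) _.
have tailsO : [set e.1 | e in M] \subset omnians a X.
  by apply/subsetP=> _ /imsetP[[o w] /subM /setXP[oO _] ->].
by rewrite cardsD (setIidPr tailsO) card_in_imset // cM.
Qed.

Lemma optimal_path_partition : exists2 P, path_partition a P & size P = #|X| + k.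
Proof.
have [T sT leavesT] := optimal_spanning_tree.
have [S mS cS] := spanning_tree_arc_matching sT.
have [P pP cP] := arc_matching_path_partition network_acyclic mS.
exists P => //; apply/eqP; rewrite eqn_leq path_partition_bound // andbT.
have := cardsID X (tree_leaves T); have := subset_leq_card (subsetIr (tree_leaves T) X); lia.
Qed.

End Network.

Notation SS v := (Some (Some v)).

Lemma SS_inj (V : finType) : injective (fun v : V => SS v).
Proof. by move=> u v []. Qed.

Lemma SS_in_att_leaves (V : finType) (X : {set V}) v : (SS v \in att_leaves X) = (v \in X).
Proof. by rewrite in_setU1 (mem_imset _ _ (@SS_inj V)). Qed.

Section AttachLeaf.
Variables (V : finType) (a : rel V) (r : V) (T : {set V * V}) (b z : V).
Hypotheses (sT : spanning_tree a r T) (b_leaf : b \in tree_leaves T).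

(* [T] plus the arcs [b -> u -> y]; the subdivided arc [(b, z)] is not in [T], as [b] is a
   leaf of [T]. *)
Definition attach_tree : {set option (option V) * option (option V)} :=
  [set e | match e with
           | (SS p, SS q) => (p, q) \in T
           | (SS p, Some None) => p == b
           | (Some None, None) => true
           | _ => false
           end].

Lemma attach_tree_spanning : spanning_tree (att_rel a b z) (SS r) attach_tree.
Proof.
have bNT w : (b, w) \notin T by move: b_leaf; rewrite inE => /forallP.
apply: spanning_tree_intro.
- move=> [[[p|]|] [[q|]|]]; rewrite inE //= => pq.
  rewrite (spanning_tree_arc sT pq) /=; apply: contraNneq (bNT q) => -[pb _].
  by rewrite -pb.
- move=> [[v|]|] vr; last by exists (Some None); rewrite inE.
    have [|u uv] := spanning_tree_parent sT (v := v); first by apply: contraNneq vr => ->.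
    by exists (SS u); rewrite inE.
  by exists (SS b); rewrite inE /=.
- move=> p q [[w|]|]; rewrite !inE.
    by case: p q => [[p|]|] // [[q|]|] // pw qw; rewrite (spanning_tree_parent_uniq sT pw qw).
    by case: p q => [[p|]|] // [[q|]|] // /eqP-> /eqP->.
  by case: p q => [[p|]|] // [[q|]|].
- by move=> [[u|]|]; rewrite inE //=; exact: (spanning_tree_root sT u).
have connSS v : connect (fun x y => (x, y) \in attach_tree) (SS r) (SS v).
  apply: (connect_homo (f := fun v => SS v) _ (spanning_tree_connect sT v)) => p q pq.
  by rewrite inE.
have connU : connect (fun x y => (x, y) \in attach_tree) (SS r) (Some None).
  by apply: connect_trans (connSS b) (connect1 _); rewrite inE /=.
by move=> [[v|]|] //; apply: connect_trans connU (connect1 _); rewrite inE.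
Qed.

Lemma attach_tree_leaves X :
  tree_leaves attach_tree :\: att_leaves X = [set SS v | v in (tree_leaves T :\: X) :\ b].
Proof.
have leafSS v : (SS v \in tree_leaves attach_tree) = (v != b) && (v \in tree_leaves T).
  rewrite !inE; apply/forallP/andP=> [leaf_v|[vNb /forallP leaf_v] [[w|]|]]; rewrite ?inE //=.
  split; last by apply/forallP=> w; have := leaf_v (SS w); rewrite inE.
  by apply: contraTneq (leaf_v (Some None)) => ->; rewrite inE /= eqxx.
apply/setP=> -[[v|]|]; rewrite in_setD.
- rewrite leafSS SS_in_att_leaves (mem_imset _ _ (@SS_inj V)) !inE.
  by case: (v \in X); case: (v == b).
- have uNleaf : Some None \notin tree_leaves attach_tree.
    by rewrite inE negb_forall; apply/existsP; exists None; rewrite inE.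
  by rewrite (negbTE uNleaf) andbF; apply/esym/negbTE/imsetP=> -[w _ eq_u]; discriminate eq_u.
- by rewrite in_setU1 eqxx /=; apply/esym/negbTE/imsetP=> -[w _ eq_y]; discriminate eq_y.
Qed.

End AttachLeaf.

Lemma spanning_tree_attach_tb (V : finType) (a : rel V) r (X : {set V}) (T : {set V * V}) :
  spanning_tree a r T -> (forall v, v \notin X -> exists w, a v w) ->
  attach_tb a r X #|tree_leaves T :\: X|.
Proof.
move=> sT out; move En: #|tree_leaves T :\: X| => n.
elim: n V a r X T En sT out => [|n IHn] V a r X T En sT out.
  by apply: AT0; exists T; split; rewrite // -setD_eq0 -cards_eq0 En.
have [b bl] : exists b, b \in tree_leaves T :\: X by apply/set0Pn; rewrite -cards_eq0 En.
move: (bl); rewrite inE => /andP[bNX b_leaf]; have [z bz] := out b bNX.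
apply: (ATS bz); apply: (IHn _ _ _ _ _ _ (attach_tree_spanning z sT b_leaf)).
  rewrite attach_tree_leaves card_imset; last exact: SS_inj.
  by move: En; rewrite (cardsD1 b) bl => -[].
move=> [[v|]|]; rewrite ?SS_in_att_leaves => vNX; last by rewrite in_setU1 eqxx in vNX.
  have [w vw] := out v vNX; have [[vb _]|vwNbz] := eqVneq (v, w) (b, z).
    by exists (Some None); rewrite /= vb.
  by exists (SS w); rewrite /= vw.
by exists None.
Qed.

Section DetachLeaf.
Variables (V : finType) (a : rel V) (r x z : V) (T' : {set option (option V) * option (option V)}).
Hypotheses (xz : a x z) (zr : z != r) (sT' : spanning_tree (att_rel a x z) (SS r) T').

(* Contract the subdivision vertex [Some None] back into the arc [(x, z)]. *)
Definition detach_tree : {set V * V} :=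
  [set e | ((SS e.1, SS e.2) \in T') || ((e == (x, z)) && ((Some None, SS z) \in T'))].

Lemma detach_tree_spanning : spanning_tree a r detach_tree.
Proof.
have arcT' := spanning_tree_arc sT'.
apply: spanning_tree_intro.
- move=> [p q]; rewrite inE /= => /orP[/arcT' /andP[] //|/andP[/eqP[-> ->] _]].
  exact: xz.
- move=> v vr; have [|[[p|]|] pv] := spanning_tree_parent sT' (v := SS v).
  + by apply: contraNneq vr => -[->].
  + by exists p; rewrite inE pv.
  + have /= /eqP vz := arcT' _ pv; subst v.
    by exists x; rewrite inE pv eqxx orbT.
  + by have := arcT' _ pv.
- move=> p q w; rewrite !inE /=.
  have parent_uniq := spanning_tree_parent_uniq sT'.
  case/orP=> [pw|/andP[/eqP[-> wz] uz]]; case/orP=> [qw|/andP[/eqP[-> wz'] uz']] //.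
  + by case: (parent_uniq _ _ _ pw qw).
  + by move: pw; rewrite wz' => /parent_uniq/(_ uz').
  + by move: qw; rewrite wz => /parent_uniq/(_ uz).
- move=> u; rewrite inE /= negb_or (spanning_tree_root sT') /= negb_and.
  by rewrite xpair_eqE negb_and (eq_sym r) zr orbT.
move=> v; pose reached q :=
  if q is Some q' then connect (fun u w => (u, w) \in detach_tree) r (odflt x q') else true.
apply: (connect_ind (P := reached) _ _ (spanning_tree_connect sT' (SS v))); first exact: connect0.
move=> [[p|]|] [[q|]|] //= reach_p pq; move: (arcT' _ pq) => /= pq_arc //.
- by apply: connect_trans reach_p (connect1 _); rewrite inE /= pq.
- by move/eqP: pq_arc reach_p => ->.
- move/eqP: pq_arc pq => -> uz; apply: connect_trans reach_p (connect1 _).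
  by rewrite inE /= eqxx uz orbT.
Qed.

Lemma detach_tree_leaves X :
  #|tree_leaves detach_tree :\: X| <= #|tree_leaves T' :\: att_leaves X|.+1.
Proof.
set L := tree_leaves detach_tree :\: X.
have sub : [set SS v | v in L :\ x] \subset tree_leaves T' :\: att_leaves X.
  apply/subsetP=> q /imsetP[v + ->]; rewrite in_setD1 !in_setD => /and3P[vx vNX vl].
  rewrite SS_in_att_leaves vNX inE; move: vl; rewrite inE => /forallP leaf_v.
  apply/forallP=> -[[w|]|]; apply/negP=> vw.
  - by have := leaf_v w; rewrite inE /= vw.
  - by have /= := spanning_tree_arc sT' vw; rewrite (negbTE vx).
  - by have := spanning_tree_arc sT' vw.
have := subset_leq_card sub; rewrite card_imset; last exact: SS_inj.
by rewrite (cardsD1 x L) -add1n => le_L; apply: leq_add (leq_b1 _) le_L.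
Qed.

End DetachLeaf.

Lemma attach_tb_spanning_tree (V : finType) (a : rel V) r (X : {set V}) n :
  attach_tb a r X n -> (forall u, ~~ a u r) ->
  exists2 T, spanning_tree a r T & #|tree_leaves T :\: X| <= n.
Proof.
elim=> {V a r X n} [V a r X [T [sT leavesX]] _ | V a r X x z n xz _ IHn noRoot].
  by exists T; rewrite // leqn0 cards_eq0 setD_eq0.
have zr : z != r by apply: contraNneq (noRoot x) => <-.
have [|T' sT' leT'] := IHn.
  by move=> [[p|]|] //=; rewrite ?(negbTE (noRoot p)) // eq_sym (negbTE zr).
exists (detach_tree x z T'); first exact: detach_tree_spanning xz zr sT'.
exact: leq_trans (detach_tree_leaves sT' X) _.
Qed.

Theorem theorem6 (V : finType) (a : rel V) (r : V) (X : {set V}) :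
  phylo_network a r X ->
  let k := #|omnians a X| - max_matching_size a X in
  [/\ is_min (l_cand a r X) k,
      (exists d, is_min (d_cand a) d /\ d - #|X| = k) &
      is_min (attach_tb a r X) k].
Proof.
move=> netN k; rewrite {}/k.
have [T sT leavesT] := optimal_spanning_tree netN.
have [P pP sizeP] := optimal_path_partition netN.
split.
- split; first by exists T.
  by move=> m [T' [sT' <-]]; exact: (spanning_tree_leaves_bound netN).
- exists (size P); split; last by rewrite sizeP addKn.
  split; first by exists P.
  by move=> m [P' [pP' <-]]; rewrite sizeP; exact: (path_partition_bound netN).
- split; first by rewrite -leavesT; exact: spanning_tree_attach_tb sT (nonleaf_out_arc netN).
  move=> n /attach_tb_spanning_tree [|T' sT' leT']; first exact: (no_arc_to_root netN).
  exact: leq_trans (spanning_tree_leaves_bound netN sT') leT'.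
Qed.
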